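(* Let $K\ge 2$, $N\ge 2K$ (allowing $N=\infty$), let $B$ be a fully simplified parameter set of size $K$, let $x$ be a causal sequence with $x[0]\neq0$ and $y=h[\cdot;B]*x$. Let $d(\cdot,\cdot)\ge 0$ be any function on pairs of length-$N$ vectors with $d(a,b)=0$ iff $a=b$, and define on ordered parameter vectors $\tilde B^{\mathrm{ord}}=((\tilde b_k,\tilde\beta_k))_{k=1}^K\in\mathbb{C}^{2K}$ the objective $\mathcal{L}(\tilde B^{\mathrm{ord}})=d\big((y[n])_{0\le n<N},((h[\cdot;\tilde B^{\mathrm{ord}}]*x)[n])_{0\le n<N}\big)$. Then for any ordering $B^{\mathrm{ord}}$ of $B$ and any non-identity permutation $\sigma$ of $\{1,\dots,K\}$, $\mathcal{L}(B^{\mathrm{ord}})=\mathcal{L}(\sigma(B^{\mathrm{ord}}))=0$ while $\mathcal{L}(\lambda B^{\mathrm{ord}}+(1-\lambda)\sigma(B^{\mathrm{ord}}))>0$ for every $0<\lambda<1$. In particular $\mathcal{L}$ is not convex on $\mathbb{C}^{2K}\cong\mathbb{R}^{4K}$.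
   Context: A parameter set is an unordered finite set $B=\{(b_k,\beta_k)\}_{k=1}^K$ with $b_k,\beta_k\in\mathbb{C}$; it is fully simplified if the poles are pairwise distinct and all coefficients are nonzero. For a list of pairs $((c_k,\gamma_k))_k$ the causal impulse response is $h[n]=\sum_k c_k\gamma_k^n$ for $n\ge0$, $0$ for $n<0$ ($0^0=1$). For an ordered vector $B^{\mathrm{ord}}=((b_k,\beta_k))_k$, $\sigma(B^{\mathrm{ord}})=((b_{\sigma(k)},\beta_{\sigma(k)}))_k$, and convex combinations are taken componentwise. Causal sequences vanish at negative indices and $(h*x)[n]=\sum_m h[m]x[n-m]$. *)

From HB Require Import structures.
From mathcomp Require Import all_boot all_order all_algebra all_fingroup.
From mathcomp Require Import reals.
From mathcomp Require Import complex.
Set Implicit Arguments. Unset Strict Implicit. Unset Printing Implicit Defensive.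
Import Order.TTheory GRing.Theory Num.Theory.
Local Open Scope ring_scope.

(* An ordered parameter vector ((b_k, beta_k))_{k<K}: b_k coefficient, beta_k pole. *)
Definition parvec (R : realType) (K : nat) := 'I_K -> (complex R * complex R).

(* Causal impulse response h[n] = sum_k c_k gamma_k^n for n >= 0 (0^0 = 1). *)
Definition impresp (R : realType) (K : nat) (B : parvec R K) (n : nat) : complex R :=
  \sum_(k < K) (B k).1 * (B k).2 ^+ n.

(* Convolution of causal sequences (indexed by nat, zero at negative indices):
   (h * x)[n] = sum_{m=0}^{n} h[m] x[n-m]. *)
Definition causal_conv (R : realType) (h x : nat -> complex R) (n : nat) : complex R :=
  \sum_(m < n.+1) h m * x (n - m)%N.

Definition fully_simplified (R : realType) (K : nat) (B : parvec R K) : Prop :=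
  injective (fun k => (B k).2) /\ (forall k, (B k).1 != 0).

Definition permute_par (R : realType) (K : nat) (s : 'S_K) (B : parvec R K) : parvec R K :=
  fun k => B (s k).

Definition convcomb (R : realType) (K : nat) (lam : R) (B1 B2 : parvec R K) : parvec R K :=
  fun k => ((Complex lam 0) * (B1 k).1 + (Complex (1 - lam) 0) * (B2 k).1,
            (Complex lam 0) * (B1 k).2 + (Complex (1 - lam) 0) * (B2 k).2).

(* Observation length N, possibly infinite: Some m = finite length m, None = infinity. *)
Definition lenN_le (a : nat) (N : option nat) : Prop :=
  match N with Some m => (a <= m)%N | None => True end.

Definition vecN (R : realType) (N : option nat) : Type :=
  match N with Some m => 'I_m -> complex R | None => nat -> complex R end.

Definition window (R : realType) (N : option nat) (s : nat -> complex R) : vecN R N :=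
  match N as N0 return vecN R N0 with
  | Some m => fun i : 'I_m => s (nat_of_ord i)
  | None => s
  end.

Definition objective (R : realType) (K : nat) (N : option nat)
  (d : vecN R N -> vecN R N -> R) (y x : nat -> complex R) (Bt : parvec R K) : R :=
  d (window N y) (window N (causal_conv (impresp Bt) x)).

Definition convex_on_par (R : realType) (K : nat) (L : parvec R K -> R) : Prop :=
  forall (u v : parvec R K) (lam : R), 0 <= lam <= 1 ->
    L (convcomb lam u v) <= lam * L u + (1 - lam) * L v.


(* Every permutation of B gives the same impulse response, hence zero loss.
   Conversely, zero loss at a parameter vector B' forces h[.;B'] = h[.;B] on
   the first 2K samples (deconvolve, using x[0] <> 0), and then an annihilating
   polynomial of degree < 2K shows that any pole of B occurring neither
   elsewhere in B nor in B' has coefficient 0. For B' a strict convex mix of B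
   and sigma(B), take the lexicographically largest pole beta_j among the
   indices moved by sigma: each pole of B' is a fixed pole beta_i (i <> j) or a
   strict mix of two moved poles, and neither can equal the extreme point
   beta_j. So b_j = 0, contradicting full simplification. *)
From HB Require Import structures.
From mathcomp Require Import all_boot all_order all_algebra all_fingroup.
From mathcomp Require Import reals complex.
From mathcomp Require Import ring lra.
From mathcomp Require boolp.
Import Order.TTheory GRing.Theory Num.Theory.
Local Open Scope ring_scope.
Set Implicit Arguments.
Unset Strict Implicit.

Section LexicographicExtremality.
Context {R : realType}.
Implicit Types (lam : R) (z w p : complex R).

Definition cmix lam z w : complex R := Complex lam 0 * z + Complex (1 - lam) 0 * w.

Definition lexC z : R *l R := (complex.Re z, complex.Im z).

Lemma cmixxx lam z : cmix lam z z = z.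
Proof. by case: z => a b; rewrite /cmix /=; congr Complex; ring. Qed.

Lemma cmixE lam a b c e :
  cmix lam (Complex a b) (Complex c e) =
  Complex (lam * a + (1 - lam) * c) (lam * b + (1 - lam) * e).
Proof. by rewrite /cmix /=; congr Complex; ring. Qed.

Lemma mix_extreme lam a c r : 0 < lam < 1 -> a <= r -> c <= r ->
  lam * a + (1 - lam) * c = r -> a = r /\ c = r.
Proof.
move=> /andP[l0 l1] ar cr e.
by split; apply/eqP; rewrite eq_le; apply/andP; split=> //; nra.
Qed.

(* Lexicographic maxima of a set of points are extreme points of its convex hull. *)
Lemma cmix_lex_extreme lam z w p : 0 < lam < 1 ->
  (lexC z <= lexC p)%O -> (lexC w <= lexC p)%O -> cmix lam z w = p -> z = p /\ w = p.
Proof.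
case: z w p => [a b] [c e] [r t] lam01; rewrite !lexi_pair /= cmixE.
move=> /andP[ar abt] /andP[cr cet] [erl eim].
have [ear ecr] := mix_extreme lam01 ar cr erl.
move: abt cet; rewrite ear ecr lexx /= => bt et.
by have [-> ->] := mix_extreme lam01 bt et eim.
Qed.

End LexicographicExtremality.

Section ExponentialSums.
Context {R : realType}.
Implicit Types (f g h x : nat -> complex R).

Lemma impresp_permute_par K (s : 'S_K) (B : parvec R K) :
  impresp (permute_par s B) = impresp B.
Proof.
apply: boolp.funext => n.
by rewrite /impresp /permute_par [RHS](reindex_inj (@perm_inj _ s)).
Qed.

Lemma causal_convBl h h' x n :
  causal_conv h x n - causal_conv h' x n = causal_conv (fun m => h m - h' m) x n.
Proof. by rewrite /causal_conv -sumrB; apply: eq_bigr => i _; rewrite mulrBl. Qed.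

(* The convolution matrix of x is lower triangular with diagonal x[0]. *)
Lemma causal_conv_eq0 h x M : x 0%N != 0 ->
  (forall n, (n < M)%N -> causal_conv h x n = 0) -> forall n, (n < M)%N -> h n = 0.
Proof.
move=> x0 hx0; elim/ltn_ind => n IH ltnM.
have := hx0 n ltnM; rewrite /causal_conv big_ord_recr /= subnn big1 => [|i _].
  by rewrite add0r => /eqP; rewrite mulf_eq0 (negbTE x0) orbF => /eqP.
by rewrite IH ?mul0r // (ltn_trans (ltn_ord i) ltnM).
Qed.

Lemma window_inj_prefix N f g M : lenN_le M N ->
  window N f = window N g -> forall n, (n < M)%N -> f n = g n.
Proof.
case: N => [m|] /= leMm fg n ltnM; last by rewrite fg.
exact: (congr1 (fun F => F (Ordinal (leq_trans ltnM leMm))) fg).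
Qed.

Lemma sum_coef_impresp K (B : parvec R K) (Q : {poly complex R}) M :
  (size Q <= M)%N ->
  \sum_(m < M) Q`_m * impresp B m = \sum_(k < K) (B k).1 * Q.[(B k).2].
Proof.
move=> szQ; rewrite /impresp.
under eq_bigr => m _ do rewrite mulr_sumr.
rewrite exchange_big /=; apply: eq_bigr => k _.
rewrite (horner_coef_wide _ szQ) mulr_sumr; apply: eq_bigr => m _.
by rewrite mulrCA.
Qed.

(* The annihilating polynomial has degree K + K' - 1, so only the first K + K'
   samples are used. *)
Lemma impresp_coef_eq0 K K' (B : parvec R K) (B' : parvec R K') (j : 'I_K) :
  (forall n, (n < K + K')%N -> impresp B n = impresp B' n) ->
  (forall k, k != j -> (B k).2 != (B j).2) ->
  (forall i, (B' i).2 != (B j).2) -> (B j).1 = 0.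
Proof.
move=> hBB' poleBj poleB'j.
set rs := [seq (B k).2 | k <- rem j (enum 'I_K)] ++ [seq (B' i).2 | i <- enum 'I_K'].
set Q := \prod_(z <- rs) ('X - z%:P).
have szQ : (size Q <= K + K')%N.
  rewrite size_prod_XsubC size_cat !size_map size_rem ?mem_enum //.
  rewrite -enumT !size_enum_ord.
  by rewrite -addSn prednK // (leq_ltn_trans _ (ltn_ord j)).
have Qrs z : z \in rs -> Q.[z] = 0.
  by move=> zrs; apply/eqP; rewrite -rootE root_prod_XsubC.
have QBj : Q.[(B j).2] != 0.
  rewrite -rootE root_prod_XsubC mem_cat negb_or; apply/andP; split.
    apply/mapP => -[k]; rewrite mem_rem_uniq ?enum_uniq // inE => /andP[kj _] e.
    by move: (poleBj k kj); rewrite e eqxx.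
  by apply/mapP => -[i _ e]; move: (poleB'j i); rewrite e eqxx.
have := sum_coef_impresp B szQ.
under eq_bigr => m _ do rewrite hBB' //.
rewrite sum_coef_impresp // big1 => [|i _]; last first.
  by rewrite Qrs ?mulr0 // mem_cat (map_f (fun i => (B' i).2)) ?mem_enum ?orbT.
rewrite (bigD1 j) //= big1 => [|k kj]; last first.
  rewrite Qrs ?mulr0 // mem_cat (map_f (fun k => (B k).2)) //.
  by rewrite mem_rem_uniq ?enum_uniq // inE kj mem_enum.
by rewrite addr0 => /esym/eqP; rewrite mulf_eq0 (negbTE QBj) orbF => /eqP.
Qed.

Lemma objective_eq0_impresp K K' N (d : vecN R N -> vecN R N -> R)
    (B : parvec R K) (B' : parvec R K') x M :
  (forall a b, d a b = 0 <-> a = b) -> lenN_le M N -> x 0%N != 0 ->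
  objective d (causal_conv (impresp B) x) x B' = 0 ->
  forall n, (n < M)%N -> impresp B n = impresp B' n.
Proof.
move=> d0 leMN x0 /d0 /(window_inj_prefix leMN) yy' n ltnM.
apply/eqP; rewrite -subr_eq0; apply/eqP; move: n ltnM.
by apply: (causal_conv_eq0 x0) => n ltnM; rewrite -causal_convBl yy' // subrr.
Qed.

End ExponentialSums.

Section PermutedParameters.
Context {R : realType} {K : nat}.
Implicit Types (B : parvec R K) (s : 'S_K).

Lemma perm_moved s : s != 1%g -> exists k, s k != k.
Proof.
move=> s1; apply/existsP; apply: contraR s1 => /existsPn fix_s.
by apply/eqP/permP => k; rewrite perm1; apply/eqP/negPn.
Qed.

Lemma lex_max_moved_pole B s : s != 1%g ->
  exists2 j, s j != j & forall k, s k != k -> (lexC (B k).2 <= lexC (B j).2)%O.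
Proof.
move=> /perm_moved[k0 sk0].
have := @arg_maxP _ _ _ k0 [pred k | s k != k] (fun k => lexC (B k).2) sk0.
by case=> j; exists j.
Qed.

Lemma convcomb_pole_neq B s lam j :
  injective (fun k => (B k).2) -> 0 < lam < 1 -> s j != j ->
  (forall k, s k != k -> (lexC (B k).2 <= lexC (B j).2)%O) ->
  forall i, (convcomb lam B (permute_par s B) i).2 != (B j).2.
Proof.
move=> inj lam01 sj lexmax i; apply/eqP; rewrite [LHS]/=.
have [si|si] := eqVneq (s i) i.
  by rewrite /permute_par si -/(cmix _ _ _) cmixxx => /inj ij; rewrite -ij si eqxx in sj.
have ssi : s (s i) != s i by rewrite (inj_eq (@perm_inj _ s)).
move=> /(cmix_lex_extreme lam01 (lexmax _ si) (lexmax _ ssi)) [/inj ij /inj sij].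
by rewrite sij ij eqxx in si.
Qed.

Lemma objective_convcomb_permute_gt0 N (d : vecN R N -> vecN R N -> R)
    B x s lam :
  lenN_le (2 * K) N -> fully_simplified B -> x 0%N != 0 ->
  (forall a b, 0 <= d a b) -> (forall a b, d a b = 0 <-> a = b) ->
  s != 1%g -> 0 < lam < 1 ->
  0 < objective d (causal_conv (impresp B) x) x (convcomb lam B (permute_par s B)).
Proof.
move=> leKN [inj b0] x0 d_ge0 d0 s1 lam01.
rewrite lt_def d_ge0 andbT; apply/eqP => /(objective_eq0_impresp d0) hBB'.
have [j sj lexmax] := lex_max_moved_pole B s1.
apply: (negP (b0 j)); apply/eqP; apply: (impresp_coef_eq0 (j := j)).
- by apply: hBB' => //; rewrite addnn -mul2n.
- by move=> k; apply: contra => /eqP/inj ->.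
- exact: convcomb_pole_neq.
Qed.

End PermutedParameters.

Lemma not_convex_on_par (R : realType) K (L : parvec R K -> R) u v :
  L u = 0 -> L v = 0 -> 0 < L (convcomb (2^-1) u v) -> ~ convex_on_par L.
Proof.
move=> Lu Lv Lmid convL.
have half01 : 0 <= (2^-1 : R) <= 1 by apply/andP; split; lra.
by move: (convL u v _ half01); rewrite Lu Lv !mulr0 addr0 leNgt Lmid.
Qed.

Theorem mainTheorem7 (R : realType) (K : nat) (N : option nat)
  (B : parvec R K) (x : nat -> complex R)
  (d : vecN R N -> vecN R N -> R) :
  (2 <= K)%N ->
  lenN_le (2 * K)%N N ->
  fully_simplified B ->
  x 0%N != 0 ->
  (forall a b, 0 <= d a b) ->
  (forall a b, d a b = 0 <-> a = b) ->
  forall s : 'S_K, s != 1%g ->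
  let y := causal_conv (impresp B) x in
  let L := objective d y x in
  [/\ L B = 0, L (permute_par s B) = 0,
      (forall lam : R, 0 < lam < 1 -> 0 < L (convcomb lam B (permute_par s B)))
    & ~ convex_on_par L].
Proof.
(* K >= 2 is implied by s != 1. *)
move=> _ leKN simplB x0 d_ge0 d0 s s1 y L.
have LB : L B = 0 by apply/d0.
have LsB : L (permute_par s B) = 0 by rewrite /L /objective impresp_permute_par; apply/d0.
have Lmix lam : 0 < lam < 1 -> 0 < L (convcomb lam B (permute_par s B)).
  exact: objective_convcomb_permute_gt0.
split=> //; apply: (not_convex_on_par LB LsB); apply: Lmix.
by apply/andP; split; lra.
Qed.
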